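(* Consider $\mathbb{R}$ as an SSD space with the bilinear form $\lfloor x,y\rfloor=xy$, so $q(x)=\frac12x^2$. For a nonempty set $A\subset\mathbb{R}$, one has $A=G_{\Phi_A}$ if and only if $A$ is closed and convex.
   Context: For nonempty $A\subset\mathbb{R}$, $\Phi_A(x)=\sup_{a\in A}\{xa-\frac12a^2\}$. For a proper convex $f:\mathbb{R}\to\mathbb{R}\cup\{+\infty\}$, $f^{@}(b)=\sup_{c\in\mathbb{R}}\{cb-f(c)\}$ and $G_f=\{b\in\mathbb{R}: f(b)+f^{@}(b)=b^2\}$. *)

From HB Require Import structures.
From mathcomp Require Import all_boot all_order all_algebra.
From mathcomp Require Import all_classical all_reals all_analysis.
Set Implicit Arguments. Unset Strict Implicit. Unset Printing Implicit Defensive.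
Import Order.TTheory GRing.Theory Num.Theory.
Local Open Scope classical_set_scope.
Local Open Scope ring_scope.
Local Open Scope ereal_scope.

Definition PhiA (R : realType) (A : set R) (x : R) : \bar R :=
  ereal_sup [set ((x * a - a ^+ 2 / 2)%R)%:E | a in A].

Definition fconj (R : realType) (f : R -> \bar R) (b : R) : \bar R :=
  ereal_sup [set ((c * b)%R)%:E - f c | c in [set: R]].

Definition Gset (R : realType) (f : R -> \bar R) : set R :=
  [set b | f b + fconj f b = ((b ^+ 2)%R)%:E].

From HB Require Import structures.
From mathcomp Require Import all_boot all_order all_algebra.
From mathcomp Require Import all_classical all_reals all_analysis.
From mathcomp Require Import ring lra.
Set Implicit Arguments. Unset Strict Implicit. Unset Printing Implicit Defensive.
Import Order.TTheory GRing.Theory Num.Theory numFieldTopology.Exports numFieldNormedType.Exports.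
Local Open Scope classical_set_scope.
Local Open Scope ring_scope.

(* By Fenchel-Young, b lies in G_f exactly when b is a subgradient of f at b.
   For f = Phi_A we have Phi_A <= q with equality on the closure of A, so every
   point of the closure of A is in G.  If A is closed but has a gap (L, U) with
   L, U in A, then Phi_A = max of the two affine minorants coming from L and U
   near the midpoint, whose slope (L + U)/2 is a subgradient there: the midpoint
   lies in G but not in A.  Conversely, if A is a closed interval and b is not
   in A, let p be the endpoint of A nearest to b; testing the conjugate at
   c = 2b - p shows Phi_A(b) + Phi_A^@(b) > b^2, so b is not in G. *)

Lemma convex_set_is_interval (R : realFieldType) (A : set R) :
  @convex_set R R^o A <-> is_interval A.
Proof.
split=> [cvA x y Ax Ay z /andP[xz zy] | iA x y l].
  have [xy|] := eqVneq x y.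
    by have -> : z = x by apply/le_anti; rewrite xz andbT xy.
  move=> nxy; have xy : x < y by rewrite lt_neqAle nxy (le_trans xz zy).
  have t0 : 0 <= (y - z) / (y - x) by apply: divr_ge0; rewrite subr_ge0 // ltW.
  have t1 : (y - z) / (y - x) <= 1 by rewrite ler_pdivrMr ?subr_gt0 // mul1r lerB.
  have := cvA x y (Itv01 t0 t1); rewrite !in_setE => /(_ Ax Ay).
  suff -> : conv (Itv01 t0 t1) (x : convex_lmodType R^o) y = z by [].
  change ((y - z) / (y - x) * x + (1 - (y - z) / (y - x)) * y = z).
  by field; rewrite subr_eq0 gt_eqF.
rewrite !in_setE => Ax Ay; change (A (l%:num * x + (1 - l%:num) * y)).
have l0 : 0 <= l%:num by [].
have l1 : l%:num <= 1 by [].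
have [xy|/ltW yx] := leP x y; [apply: (iA x y) | apply: (iA y x)] => //;
  by apply/andP; split; nra.
Qed.

Lemma is_interval_notin (R : realFieldType) (A : set R) b : is_interval A ->
  ~ A b -> (forall a, A a -> a < b) \/ (forall a, A a -> b < a).
Proof.
move=> iA nAb; have [[a1 [A1 b1]]|] := pselect (exists a, A a /\ b <= a).
  right=> a Aa; rewrite ltNge; apply/negP => ab.
  by apply: nAb; apply: (iA a a1) => //; rewrite ab.
move=> /forallNP nb; left=> a Aa; rewrite ltNge; apply/negP => ba.
by apply: (nb a).
Qed.

Lemma closed_sup (R : realType) (A : set R) :
  A !=set0 -> has_ubound A -> closed A -> A (sup A).
Proof. by move=> A0 uA clA; apply: clA; exact: closure_sup. Qed.

Lemma closed_inf (R : realType) (A : set R) :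
  A !=set0 -> has_lbound A -> closed A -> A (inf A).
Proof.
move=> A0 lA clA; apply: (itv_closed_infimums A0 clA); split; first exact: ge_inf.
by move=> y; exact: lb_le_inf.
Qed.

Section PhiA.
Variables (R : realType) (A : set R).
Hypothesis A0 : A !=set0.

Lemma PhiA_le_sqr x : (PhiA A x <= (x ^+ 2 / 2)%:E)%E.
Proof.
apply: ge_ereal_sup => _ [a Aa <-]; rewrite lee_fin.
have := sqr_ge0 (x - a); nra.
Qed.

Lemma PhiA_ge x a : A a -> ((x * a - a ^+ 2 / 2)%:E <= PhiA A x)%E.
Proof. by move=> Aa; apply: ereal_sup_ubound; exists a. Qed.

Lemma PhiA_fin_num x : PhiA A x \is a fin_num.
Proof.
case: A0 => a Aa; move: (PhiA_le_sqr x) (PhiA_ge x Aa).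
by case: (PhiA A x).
Qed.

Definition phi x := fine (PhiA A x).

Lemma PhiAE x : PhiA A x = (phi x)%:E.
Proof. by rewrite /phi fineK // PhiA_fin_num. Qed.

Lemma phi_le_sqr x : phi x <= x ^+ 2 / 2.
Proof. by have := PhiA_le_sqr x; rewrite PhiAE lee_fin. Qed.

Lemma phi_ge x a : A a -> x * a - a ^+ 2 / 2 <= phi x.
Proof. by move=> Aa; have := PhiA_ge x Aa; rewrite PhiAE lee_fin. Qed.

Lemma phi_le x r : (forall a, A a -> x * a - a ^+ 2 / 2 <= r) -> phi x <= r.
Proof.
move=> ubr; rewrite -lee_fin -PhiAE; apply: ge_ereal_sup => _ [a Aa <-].
by rewrite lee_fin ubr.
Qed.

Lemma phi_ge_closure x a : closure A a -> x * a - a ^+ 2 / 2 <= phi x.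
Proof.
set g := fun a : R => x * a - a ^+ 2 / 2.
have g_cont : continuous g.
  move=> c; apply: cvgB; first exact: mulrl_continuous.
  by apply: cvgM; [rewrite expr2; exact: cvgM | exact: cvg_cst].
have clg : closed (g @^-1` [set y | y <= phi x]).
  by apply: preimage_closed; [move=> ? _; exact: g_cont | exact: closed_le].
by move=> clAa; apply: clg; apply: closureS clAa => ?; exact: phi_ge.
Qed.

Lemma Gset_subgradient b : (forall c, phi b + b * (c - b) <= phi c) ->
  Gset (PhiA A) b.
Proof.
move=> sub; rewrite /Gset /= PhiAE.
suff -> : fconj (PhiA A) b = (b ^+ 2 - phi b)%:E.
  by rewrite -EFinD addrC subrK.
apply/le_anti/andP; split.
  apply: ge_ereal_sup => _ [c _ <-]; rewrite PhiAE -EFinB lee_fin.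
  by have := sub c; nra.
apply: ereal_sup_ubound; exists b => //.
by rewrite PhiAE -EFinB expr2.
Qed.

Lemma closure_sub_Gset : closure A `<=` Gset (PhiA A).
Proof.
move=> b Ab; apply: Gset_subgradient => c.
have -> : phi b = b ^+ 2 / 2.
  by apply/le_anti; rewrite phi_le_sqr /=; have := phi_ge_closure b Ab; lra.
by have := phi_ge_closure c Ab; nra.
Qed.

Lemma gap_midpoint_Gset L U : A L -> A U -> L <= U ->
  (forall a, A a -> a <= L \/ U <= a) -> Gset (PhiA A) ((L + U) / 2).
Proof.
move=> AL AU LU gap; set m := (L + U) / 2.
have phim : phi m = m * L - L ^+ 2 / 2.
  apply/le_anti; rewrite phi_ge // andbT; apply: phi_le => a Aa.
  by rewrite /m; case: (gap a Aa) => ha; nra.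
apply: Gset_subgradient => c; rewrite phim.
by have := phi_ge c AL; have := phi_ge c AU; rewrite /m; nra.
Qed.

Lemma Gset_sub_is_interval : closed A -> Gset (PhiA A) `<=` A -> is_interval A.
Proof.
move=> clA GA x y Ax Ay m /andP[xm my]; apply: contrapT => nAm.
set Al := A `&` [set a | a <= m]; set Ar := A `&` [set a | m <= a].
have [AL Lm] : Al (sup Al).
  apply: closed_sup; [by exists x | by exists m => ? [] |].
  exact: closedI clA (@closed_le _ m).
have [AU mU] : Ar (inf Ar).
  apply: closed_inf; [by exists y | by exists m => ? [] |].
  exact: closedI clA (@closed_ge _ m).
have neq_m a : A a -> a != m by move=> Aa; apply: contraPneq nAm => <-.
have Lm' : sup Al < m by rewrite lt_neqAle Lm neq_m.
have mU' : m < inf Ar by rewrite lt_neqAle mU eq_sym neq_m.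
have gap a : A a -> a <= sup Al \/ inf Ar <= a.
  move=> Aa; have [am|/ltW ma] := leP a m.
    left; apply: sup_upper_bound => //.
    by split; [by exists x | by exists m => ? []].
  by right; apply: ge_inf => //; exists m => ? [].
have Amid := GA _ (gap_midpoint_Gset AL AU (ltW (lt_trans Lm' mU')) gap).
by case: (gap _ Amid); lra.
Qed.

Lemma notin_Gset_nearest b p : A p -> p != b ->
  (forall a, A a -> 0 <= (p - a) * (b - p)) -> ~ Gset (PhiA A) b.
Proof.
move=> Ap pb nearest; rewrite /Gset /= PhiAE => G.
set c := 2 * b - p.
have phic : phi c <= c * p - p ^+ 2 / 2.
  apply: phi_le => a Aa; have := nearest a Aa; rewrite /c.
  by have := sqr_ge0 (p - a); nra.
have conj_ge : ((c * b)%:E - PhiA A c <= fconj (PhiA A) b)%E.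
  by apply: ereal_sup_ubound; exists c.
have : ((phi b + (c * b - phi c))%:E <= (b ^+ 2)%:E)%E.
  by rewrite -G EFinD leeD2l // EFinB -PhiAE.
rewrite lee_fin; have := phi_ge b Ap.
have : 0 < (b - p) ^+ 2 by rewrite exprn_even_gt0 //= subr_eq0 eq_sym.
by rewrite /c in phic *; nra.
Qed.

Lemma closed_interval_Gset_sub : closed A -> is_interval A ->
  Gset (PhiA A) `<=` A.
Proof.
move=> clA iA b Gb; apply: contrapT => nAb.
have [lt_b|gt_b] := is_interval_notin iA nAb.
  have ubA : has_ubound A by exists b => a /lt_b/ltW.
  have As := closed_sup A0 ubA clA.
  apply: (notin_Gset_nearest As _ _ Gb); first by rewrite lt_eqF // lt_b.
  by move=> a Aa; rewrite mulr_ge0 // subr_ge0 ?sup_upper_bound // ltW ?lt_b.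
have lbA : has_lbound A by exists b => a /gt_b/ltW.
have Ai := closed_inf A0 lbA clA.
apply: (notin_Gset_nearest Ai _ _ Gb); first by rewrite gt_eqF // gt_b.
by move=> a Aa; rewrite mulr_le0 // subr_le0 ?ge_inf // ltW ?gt_b.
Qed.

End PhiA.

Theorem mainTheorem20 (R : realType) (A : set R) :
  A !=set0 ->
  (A = Gset (PhiA A) <-> closed A /\ @convex_set R R^o A).
Proof.
move=> A0; split.
- move=> AG; have clA : closed A.
    by move=> b /(closure_sub_Gset A0); rewrite -AG.
  split=> //; apply/convex_set_is_interval.
  by apply: Gset_sub_is_interval => // b; rewrite -AG.
- move=> [clA /convex_set_is_interval iA]; apply/seteqP; split.
    by move=> a /subset_closure; exact: closure_sub_Gset.
  exact: closed_interval_Gset_sub.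
Qed.
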